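(* If $M$ is a monoidal category which admits functorial inverses, then the underlying category of $M$ is a groupoid.
   Context: A monoidal category $M$ admits functorial inverses if there exist a functor $i:M\to M$ and a natural isomorphism $x\otimes i(x)\cong 1$. *)

Set Implicit Arguments.
Unset Strict Implicit.

Record Category := {
  Obj :> Type;
  Hom : Obj -> Obj -> Type;
  idm : forall a, Hom a a;
  comp : forall a b c, Hom b c -> Hom a b -> Hom a c;
  comp_id_l : forall a b (f : Hom a b), comp (idm b) f = f;
  comp_id_r : forall a b (f : Hom a b), comp f (idm a) = f;
  comp_assoc : forall a b c d (f : Hom c d) (g : Hom b c) (h : Hom a b),
      comp f (comp g h) = comp (comp f g) h
}.

Arguments Hom {C} a b : rename.
Arguments idm {C} a : rename.
Arguments comp {C a b c} f g : rename.

Definition is_iso (C : Category) (a b : C) (f : Hom a b) : Prop :=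
  exists g : Hom b a, comp g f = idm a /\ comp f g = idm b.

Definition is_groupoid (C : Category) : Prop :=
  forall (a b : C) (f : Hom a b), is_iso f.

Record Functor (C D : Category) := {
  fobj :> C -> D;
  fmap : forall a b : C, Hom a b -> Hom (fobj a) (fobj b);
  fmap_id : forall a : C, fmap (idm a) = idm (fobj a);
  fmap_comp : forall (a b c : C) (f : Hom b c) (g : Hom a b),
      fmap (comp f g) = comp (fmap f) (fmap g)
}.

Arguments fmap {C D} F {a b} f : rename.

Record MonoidalCategory := {
  mcat :> Category;
  tens : mcat -> mcat -> mcat;
  tensm : forall (a b c d : mcat), Hom a c -> Hom b d -> Hom (tens a b) (tens c d);
  tensm_id : forall a b : mcat, tensm (idm a) (idm b) = idm (tens a b);
  tensm_comp : forall (a1 a2 a3 b1 b2 b3 : mcat)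
      (f : Hom a2 a3) (f' : Hom a1 a2) (g : Hom b2 b3) (g' : Hom b1 b2),
      tensm (comp f f') (comp g g') = comp (tensm f g) (tensm f' g');
  munit : mcat;
  assoc : forall a b c : mcat, Hom (tens (tens a b) c) (tens a (tens b c));
  assoc_iso : forall a b c : mcat, is_iso (assoc a b c);
  assoc_nat : forall (a a' b b' c c' : mcat)
      (f : Hom a a') (g : Hom b b') (h : Hom c c'),
      comp (assoc a' b' c') (tensm (tensm f g) h)
      = comp (tensm f (tensm g h)) (assoc a b c);
  lunit : forall a : mcat, Hom (tens munit a) a;
  lunit_iso : forall a : mcat, is_iso (lunit a);
  lunit_nat : forall (a a' : mcat) (f : Hom a a'),
      comp (lunit a') (tensm (idm munit) f) = comp f (lunit a);
  runit : forall a : mcat, Hom (tens a munit) a;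
  runit_iso : forall a : mcat, is_iso (runit a);
  runit_nat : forall (a a' : mcat) (f : Hom a a'),
      comp (runit a') (tensm f (idm munit)) = comp f (runit a);
  pentagon : forall a b c d : mcat,
      comp (assoc a b (tens c d)) (assoc (tens a b) c d)
      = comp (tensm (idm a) (assoc b c d))
             (comp (assoc a (tens b c) d) (tensm (assoc a b c) (idm d)));
  triangle : forall a b : mcat,
      comp (tensm (idm a) (lunit b)) (assoc a munit b)
      = tensm (runit a) (idm b)
}.

Arguments tensm {M a b c d} f g : rename.
Arguments munit m : clear implicits.

(* M admits functorial inverses: there is a functor i : M -> M and a natural
   isomorphism eps : x (x) i(x) ~= 1, i.e. a family of isomorphisms
   eps_x : x (x) i(x) -> 1, natural in x (the target being the constant
   functor at the unit object). *)
Definition admits_functorial_inverses (M : MonoidalCategory) : Prop :=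
  exists (i : Functor M M) (eps : forall x : M, Hom (tens x (i x)) (munit M)),
    (forall x : M, is_iso (eps x)) /\
    (forall (x y : M) (f : Hom x y),
        comp (eps y) (tensm f (fmap i f)) = comp (idm (munit M)) (eps x)).

Set Implicit Arguments.
Unset Strict Implicit.

(* Naturality of [eps] forces [f ⊗ i(f)] to be invertible. Writing it as
   [(id ⊗ i f) ∘ (f ⊗ id)] and as [(f ⊗ id) ∘ (id ⊗ i f)] shows that [f ⊗ id]
   is a split mono and a split epi. Tensoring on the right with an object [z]
   that has a right inverse [w] (here [z = i x], [w = i (i x)]) is reflected up
   to the natural isomorphism [(a ⊗ z) ⊗ w ≅ a ⊗ (z ⊗ w) ≅ a ⊗ 1 ≅ a], so [f]
   itself has a retraction and a section, hence is an isomorphism. *)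

Definition split_mono (C : Category) (a b : C) (f : Hom a b) : Prop :=
  exists r : Hom b a, comp r f = idm a.

Definition split_epi (C : Category) (a b : C) (f : Hom a b) : Prop :=
  exists s : Hom b a, comp f s = idm b.

Section CategoryFacts.
Variable C : Category.

Lemma id_iso (a : C) : is_iso (idm a).
Proof. exists (idm a); split; apply comp_id_l. Qed.

Lemma iso_comp (a b c : C) (f : Hom b c) (g : Hom a b) :
  is_iso f -> is_iso g -> is_iso (comp f g).
Proof.
  intros [f' [Hf1 Hf2]] [g' [Hg1 Hg2]]. exists (comp g' f'). split.
  - rewrite comp_assoc, <- (comp_assoc g'), Hf1, comp_id_r. exact Hg1.
  - rewrite comp_assoc, <- (comp_assoc f), Hg2, comp_id_r. exact Hf2.
Qed.

Lemma iso_of_split_mono_epi (a b : C) (f : Hom a b) :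
  split_mono f -> split_epi f -> is_iso f.
Proof.
  intros [r Hr] [s Hs]. exists r. split; [exact Hr|].
  assert (Ers : r = s).
  { rewrite <- (comp_id_r r), <- Hs, comp_assoc, Hr, comp_id_l. reflexivity. }
  rewrite Ers. exact Hs.
Qed.

Lemma split_mono_comp_r (a b c : C) (g : Hom b c) (f : Hom a b) :
  split_mono (comp g f) -> split_mono f.
Proof. intros [r Hr]. exists (comp r g). rewrite <- comp_assoc. exact Hr. Qed.

Lemma split_epi_comp_l (a b c : C) (g : Hom b c) (f : Hom a b) :
  split_epi (comp g f) -> split_epi g.
Proof. intros [s Hs]. exists (comp f s). rewrite comp_assoc. exact Hs. Qed.

Section IsoSquare.
Variables (x y tx ty : C) (f : Hom x y) (tf : Hom tx ty).
Variables (px : Hom tx x) (py : Hom ty y).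
Hypotheses (Hpx : is_iso px) (Hpy : is_iso py) (Hsq : comp py tf = comp f px).

Lemma split_mono_iso_square : split_mono tf -> split_mono f.
Proof.
  destruct Hpx as [px' [Hx1 Hx2]], Hpy as [py' [Hy1 Hy2]]. intros [r Hr].
  exists (comp px (comp r py')).
  assert (Ef : comp py' f = comp tf px').
  { transitivity (comp (comp py' f) (comp px px')).
    { rewrite Hx2, comp_id_r. reflexivity. }
    rewrite comp_assoc, <- (comp_assoc py' f px), <- Hsq, comp_assoc, Hy1, comp_id_l.
    reflexivity. }
  rewrite <- comp_assoc, <- comp_assoc, Ef, (comp_assoc r tf), Hr, comp_id_l.
  exact Hx2.
Qed.

Lemma split_epi_iso_square : split_epi tf -> split_epi f.
Proof.
  destruct Hpx as [px' [Hx1 Hx2]], Hpy as [py' [Hy1 Hy2]]. intros [s Hs].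
  exists (comp px (comp s py')).
  rewrite comp_assoc, <- Hsq, <- comp_assoc, (comp_assoc tf s), Hs, comp_id_l.
  exact Hy2.
Qed.

End IsoSquare.
End CategoryFacts.

Section MonoidalFacts.
Variable M : MonoidalCategory.

Lemma tensm_iso (a b c d : M) (f : Hom a c) (g : Hom b d) :
  is_iso f -> is_iso g -> is_iso (tensm f g).
Proof.
  intros [f' [Hf1 Hf2]] [g' [Hg1 Hg2]]. exists (tensm f' g'). split.
  - rewrite <- tensm_comp, Hf1, Hg1. apply tensm_id.
  - rewrite <- tensm_comp, Hf2, Hg2. apply tensm_id.
Qed.

Lemma tensm_split_mono_l (a b c : M) (f : Hom a b) :
  split_mono f -> split_mono (tensm f (idm c)).
Proof.
  intros [r Hr]. exists (tensm r (idm c)).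
  rewrite <- tensm_comp, Hr, comp_id_l. apply tensm_id.
Qed.

Lemma tensm_split_epi_l (a b c : M) (f : Hom a b) :
  split_epi f -> split_epi (tensm f (idm c)).
Proof.
  intros [s Hs]. exists (tensm s (idm c)).
  rewrite <- tensm_comp, Hs, comp_id_l. apply tensm_id.
Qed.

Lemma tensm_factor_l (a b c d : M) (f : Hom a c) (g : Hom b d) :
  tensm f g = comp (tensm (idm c) g) (tensm f (idm b)).
Proof. rewrite <- tensm_comp, comp_id_l, comp_id_r. reflexivity. Qed.

Lemma tensm_factor_r (a b c d : M) (f : Hom a c) (g : Hom b d) :
  tensm f g = comp (tensm f (idm d)) (tensm (idm a) g).
Proof. rewrite <- tensm_comp, comp_id_l, comp_id_r. reflexivity. Qed.

Lemma iso_tensm_split_mono_l (a b c d : M) (f : Hom a c) (g : Hom b d) :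
  is_iso (tensm f g) -> split_mono (tensm f (idm b)).
Proof.
  intros [h [Hh _]]. apply (@split_mono_comp_r M _ _ _ (tensm (idm c) g)).
  exists h. rewrite <- tensm_factor_l. exact Hh.
Qed.

Lemma iso_tensm_split_epi_l (a b c d : M) (f : Hom a c) (g : Hom b d) :
  is_iso (tensm f g) -> split_epi (tensm f (idm d)).
Proof.
  intros [h [_ Hh]]. apply (@split_epi_comp_l M _ _ _ _ (tensm (idm a) g)).
  exists h. rewrite <- tensm_factor_r. exact Hh.
Qed.

Section RightInverse.
Variables (z w : M) (e : Hom (tens z w) (munit M)).
Hypothesis He : is_iso e.

Definition cancel_right (a : M) : Hom (tens (tens a z) w) a :=
  comp (runit a) (comp (tensm (idm a) e) (assoc a z w)).

Lemma cancel_right_iso (a : M) : is_iso (cancel_right a).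
Proof.
  apply iso_comp; [apply runit_iso|]. apply iso_comp; [|apply assoc_iso].
  apply tensm_iso; [apply id_iso | exact He].
Qed.

Lemma cancel_right_nat (a b : M) (g : Hom a b) :
  comp (cancel_right b) (tensm (tensm g (idm z)) (idm w)) = comp g (cancel_right a).
Proof.
  unfold cancel_right. rewrite <- !comp_assoc, assoc_nat, tensm_id.
  rewrite (comp_assoc (tensm (idm b) e)), <- tensm_comp, comp_id_l, comp_id_r.
  rewrite (tensm_factor_r g e), !comp_assoc, runit_nat. reflexivity.
Qed.

Lemma split_mono_of_tensm_l (a b : M) (g : Hom a b) :
  split_mono (tensm g (idm z)) -> split_mono g.
Proof.
  intros Hg. apply (split_mono_iso_square (cancel_right_iso a) (cancel_right_iso b)
                      (cancel_right_nat g)).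
  apply tensm_split_mono_l. exact Hg.
Qed.

Lemma split_epi_of_tensm_l (a b : M) (g : Hom a b) :
  split_epi (tensm g (idm z)) -> split_epi g.
Proof.
  intros Hg. apply (split_epi_iso_square (cancel_right_iso a) (cancel_right_iso b)
                      (cancel_right_nat g)).
  apply tensm_split_epi_l. exact Hg.
Qed.

End RightInverse.

Lemma iso_of_nat_iso_to_unit (i : Functor M M)
    (eps : forall x : M, Hom (tens x (i x)) (munit M)) (x y : M) (f : Hom x y) :
  is_iso (eps x) -> is_iso (eps y) ->
  comp (eps y) (tensm f (fmap i f)) = comp (idm (munit M)) (eps x) ->
  is_iso (tensm f (fmap i f)).
Proof.
  intros Hx [ey [Hy1 Hy2]] Hn. rewrite comp_id_l in Hn.
  assert (Ef : tensm f (fmap i f) = comp ey (eps x)).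
  { rewrite <- Hn, comp_assoc, Hy1, comp_id_l. reflexivity. }
  rewrite Ef. apply iso_comp; [exists (eps y); split; assumption | exact Hx].
Qed.

End MonoidalFacts.

Theorem lemma3p13 (M : MonoidalCategory) :
  admits_functorial_inverses M -> is_groupoid M.
Proof.
  intros [i [eps [Hiso Hnat]]] x y f.
  assert (Hff : is_iso (tensm f (fmap i f))).
  { apply (iso_of_nat_iso_to_unit (Hiso x) (Hiso y) (Hnat x y f)). }
  apply iso_of_split_mono_epi.
  - apply (split_mono_of_tensm_l (Hiso (i x))).
    exact (iso_tensm_split_mono_l Hff).
  - apply (split_epi_of_tensm_l (Hiso (i y))).
    exact (iso_tensm_split_epi_l Hff).
Qed.
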